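(* Let $\lambda$ be a cardinal, let $M\prec\mathcal{C}$ be $\lambda$-saturated, let $A$ be a set with $P^M\subseteq A\subseteq M$, and let $p(\bar x)$ be a partial type over $A$ with $|p|<\lambda$, where $\bar x$ is a (possibly infinite) tuple of fewer than $\lambda$ variables. Then there is $p^*(\bar x)\in S_*(A)$ extending $p$.
   Context: Standing assumptions: $T$ is a complete first-order theory in a vocabulary with no function symbols, $P$ a unary predicate, $\mathcal{C}$ a monster model of $T$; all models are elementary submodels of $\mathcal{C}$ and all sets are subsets of $\mathcal{C}$. $P^A=A\cap P^{\mathcal{C}}$. Assumed throughout: $P$ is stably embedded (subsets of $P^{\mathcal{C}}$ definable with parameters in $\mathcal{C}$ are definable in $\mathcal{C}|_P$ with parameters from $P^{\mathcal{C}}$), $0$-definable subsets of $P^{\mathcal{C}}$ are $0$-definable in $\mathcal{C}|_P$, and $T$ has quantifier elimination. A set $A$ is complete if for every formula $\psi(\bar x,\bar y)$ and $\bar b\subseteq A$, $\models(\exists\bar x\in P)\psi(\bar x,\bar b)$ implies $\models\psi(\bar a,\bar b)$ for some $\bar a\subseteq P\cap A$. For complete $A$, $S_*(A)=\{\mathrm{tp}(\bar c/A): P\cap(A\cup\bar c)=P\cap A\text{ and }A\cup\bar c\text{ is complete}\}$. *)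

From Stdlib Require Import List Fin.
Import ListNotations.

(* A relational vocabulary (no function or constant symbols).
   The distinguished unary predicate P is built into the syntax (fP). *)
Record vocab := { rel : Type; arity : rel -> nat }.

Inductive form (L : vocab) (V : Type) : Type :=
| fTop : form L V
| fP : V -> form L V
| fEq : V -> V -> form L V
| fRel (r : rel L) : (Fin.t (arity L r) -> V) -> form L V
| fNot : form L V -> form L V
| fAnd : form L V -> form L V -> form L V
| fEx : form L (option V) -> form L V.

Arguments fTop {L V}.
Arguments fP {L V}.
Arguments fEq {L V}.
Arguments fRel {L V}.
Arguments fNot {L V}.
Arguments fAnd {L V}.
Arguments fEx {L V}.

Record structure (L : vocab) := {
  car : Type;
  Pint : car -> Prop;
  relI : forall r : rel L, (Fin.t (arity L r) -> car) -> Prop }.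

Arguments car {L}.
Arguments Pint {L}.
Arguments relI {L}.

Definition ext {T V : Type} (s : V -> T) (c : T) : option V -> T :=
  fun o => match o with Some v => s v | None => c end.

(* Satisfaction in C with quantifiers relativized to the subset D of C.
   For D = the universe this is satisfaction in C; for D = M (M a subset,
   hence a substructure since there are no function symbols) it is
   satisfaction in the substructure M; for D = P^C it is satisfaction in
   the induced structure C|_P. *)
Fixpoint sat_in {L : vocab} (C : structure L) (D : car C -> Prop)
  {V : Type} (s : V -> car C) (phi : form L V) {struct phi} : Prop :=
  match phi with
  | fTop => True
  | fP v => Pint C (s v)
  | fEq v w => s v = s w
  | fRel r a => relI C r (fun i => s (a i))
  | fNot psi => ~ sat_in C D s psi
  | fAnd psi chi => sat_in C D s psi /\ sat_in C D s chi
  | fEx psi => exists c, D c /\ sat_in C D (ext s c) psi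
  end.

Definition sat {L : vocab} (C : structure L) {V : Type} (s : V -> car C)
  (phi : form L V) : Prop := sat_in C (fun _ => True) s phi.

Fixpoint qf {L : vocab} {V : Type} (phi : form L V) : Prop :=
  match phi with
  | fNot psi => qf psi
  | fAnd psi chi => qf psi /\ qf chi
  | fEx _ => False
  | _ => True
  end.

Definition sum_asg {T X Y : Type} (f : X -> T) (g : Y -> T) : X + Y -> T :=
  fun v => match v with inl x => f x | inr y => g y end.

(* Cardinal comparison: |T| < lambda, lambda represented by a type Lam. *)
Definition card_le (T U : Type) : Prop :=
  exists f : T -> U, forall x y, f x = f y -> x = y.
Definition card_lt (T U : Type) : Prop := card_le T U /\ ~ card_le U T.

Section ModelTheory.
Context {L : vocab} (C : structure L).

Definition elementary (M : car C -> Prop) : Prop :=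
  forall (V : Type) (phi : form L V) (s : V -> car C),
    (forall v, M (s v)) -> (sat_in C M s phi <-> sat C s phi).

Definition saturated (Lam : Type) (M : car C -> Prop) : Prop :=
  forall B : car C -> Prop, (forall b, B b -> M b) -> card_lt (sig B) Lam ->
  forall q : form L (unit + sig B) -> Prop,
    (forall l : list (form L (unit + sig B)), (forall phi, In phi l -> q phi) ->
       exists m, M m /\ forall phi, In phi l ->
         sat_in C M (sum_asg (fun _ : unit => m) (@proj1_sig _ B)) phi) ->
    exists m, M m /\ forall phi, q phi ->
      sat_in C M (sum_asg (fun _ : unit => m) (@proj1_sig _ B)) phi.

Definition stably_embedded : Prop :=
  forall (n m : nat) (phi : form L (Fin.t n + Fin.t m)) (c : Fin.t m -> car C),
  exists (k : nat) (psi : form L (Fin.t n + Fin.t k)) (b : Fin.t k -> car C),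
    (forall j, Pint C (b j)) /\
    forall a : Fin.t n -> car C, (forall i, Pint C (a i)) ->
      (sat C (sum_asg a c) phi <-> sat_in C (Pint C) (sum_asg a b) psi).

Definition P_zero_definable : Prop :=
  forall (n : nat) (phi : form L (Fin.t n)),
  exists psi : form L (Fin.t n),
    forall a : Fin.t n -> car C, (forall i, Pint C (a i)) ->
      (sat C a phi <-> sat_in C (Pint C) a psi).

Definition has_QE : Prop :=
  forall (n : nat) (phi : form L (Fin.t n)),
  exists psi : form L (Fin.t n), qf psi /\
    forall a : Fin.t n -> car C, sat C a phi <-> sat C a psi.

Definition complete (A : car C -> Prop) : Prop :=
  forall (n m : nat) (psi : form L (Fin.t n + Fin.t m)) (b : Fin.t m -> car C),
    (forall j, A (b j)) ->
    (exists a : Fin.t n -> car C, (forall i, Pint C (a i)) /\ sat C (sum_asg a b) psi) ->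
    exists a : Fin.t n -> car C, (forall i, Pint C (a i) /\ A (a i)) /\
      sat C (sum_asg a b) psi.

Definition tp {X : Type} (c : X -> car C) (A : car C -> Prop)
  : form L (X + sig A) -> Prop :=
  fun phi => sat C (sum_asg c (@proj1_sig _ A)) phi.

Definition partial_type {X : Type} (A : car C -> Prop)
  (p : form L (X + sig A) -> Prop) : Prop :=
  forall l : list (form L (X + sig A)), (forall phi, In phi l -> p phi) ->
    exists c : X -> car C, forall phi, In phi l ->
      sat C (sum_asg c (@proj1_sig _ A)) phi.

Definition union_tuple {X : Type} (A : car C -> Prop) (c : X -> car C)
  : car C -> Prop := fun e => A e \/ exists x, c x = e.

Definition S_star (X : Type) (A : car C -> Prop)
  (q : form L (X + sig A) -> Prop) : Prop :=
  complete A /\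
  exists c : X -> car C,
    (forall phi, q phi <-> tp c A phi) /\
    (forall e, Pint C e -> (union_tuple A c e <-> A e)) /\
    complete (union_tuple A c).

End ModelTheory.

(* Build the realization inside M by Zorn's lemma on partial assignments t of the
   variables into M such that every finite part of p is realized by some assignment
   agreeing with t on its variables.  A maximal such t is total: a new variable x can be
   assigned by realizing in M the 1-type over (the parameters of p) + (the values of t)
   saying that every finite part of p is realizable with that value at x.  This type is
   finitely satisfiable, and it has fewer than lambda parameters because
   |X + p * nat| < lambda (Q * nat injects into Q for infinite Q), so lambda-saturation
   applies; if p is finite, elementarity already suffices.  The resulting tuple c lies in
   M, so P meets A u c only in P^M, which is contained in A; and every set between P^M
   and M is complete because M is an elementary submodel. *)

From mathcomp Require Import classical_sets.
From Stdlib Require Import List Classical ClassicalEpsilon FunctionalExtensionality ProofIrrelevance Cantor PeanoNat.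
Import ListNotations.
Local Open Scope classical_set_scope.

Definition witness {T : Type} {P : T -> Prop} (H : exists x, P x) : T :=
  proj1_sig (constructive_indefinite_description P H).

Lemma witnessP {T : Type} {P : T -> Prop} (H : exists x, P x) : P (witness H).
Proof. exact (proj2_sig (constructive_indefinite_description P H)). Qed.

Lemma proj1_sig_inj {T : Type} {P : T -> Prop} (u v : sig P) :
  proj1_sig u = proj1_sig v -> u = v.
Proof. apply eq_sig_hprop; intros; apply proof_irrelevance. Qed.

Section Graphs.
Context {K W : Type}.

Definition graph_dom (G : set (K * W)) : set K := fun k => exists w, G (k, w).

Definition functional_graph (G : set (K * W)) : Prop :=
  forall k w w', G (k, w) -> G (k, w') -> w = w'.

Definition injective_graph (G : set (K * W)) : Prop :=
  forall k k' w, G (k, w) -> G (k', w) -> k = k'.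

Lemma Zorn_maximal (P : set (set (K * W))) :
  (forall F, F `<=` P -> total_on F subset -> P (\bigcup_(G in F) G)) ->
  exists G, P G /\ forall G', P G' -> G `<=` G' -> G' `<=` G.
Proof.
  intros HP. destruct (Zorn_bigcup HP) as [G [PG Gmax]].
  exists G; split; [exact PG|]. intros G' PG' GG' a G'a.
  apply NNPP; intros nGa. apply (Gmax G'); [|exact PG'].
  split; [exact GG'|]. intros G'G. exact (nGa (G'G a G'a)).
Qed.

Lemma chain_bigcup2 (F : set (set (K * W))) a b : total_on F subset ->
  (\bigcup_(G in F) G) a -> (\bigcup_(G in F) G) b -> exists2 G, F G & G a /\ G b.
Proof.
  intros HF [G FG Ga] [G' FG' G'b].
  destruct (HF G G' FG FG') as [GG'|G'G]; [exists G'|exists G]; auto.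
Qed.

Lemma functional_bigcup (F : set (set (K * W))) :
  total_on F subset -> F `<=` functional_graph -> functional_graph (\bigcup_(G in F) G).
Proof.
  intros HF Ffun k w w' H H'.
  destruct (chain_bigcup2 _ _ _ HF H H') as [G FG [Gw Gw']]. exact (Ffun G FG _ _ _ Gw Gw').
Qed.

Lemma functional_setU1 (G : set (K * W)) k w :
  functional_graph G -> ~ graph_dom G k -> functional_graph (G `|` [set (k, w)]).
Proof.
  intros Gfun Gk k' v v' [H|H] [H'|H'].
  - exact (Gfun _ _ _ H H').
  - injection H' as -> ->. exfalso; apply Gk; exists v; exact H.
  - injection H as -> ->. exfalso; apply Gk; exists v'; exact H'.
  - injection H as -> ->. injection H' as ->. reflexivity.
Qed.

Lemma chain_cover (F : set (set (K * W))) (ks : list K) :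
  total_on F subset -> F `<=` functional_graph ->
  exists2 G, G = set0 \/ F G &
    forall k w, In k ks -> (\bigcup_(G in F) G) (k, w) -> G (k, w).
Proof.
  intros HF Ffun. induction ks as [|k ks [G FG Gcov]].
  - exists set0; [left; reflexivity|]. intros k w [].
  - destruct (classic (exists w, (\bigcup_(G in F) G) (k, w))) as [[w [G' FG' G'k]]|nk].
    + assert (Hbig : exists2 H, F H & G `<=` H /\ G' `<=` H).
      { destruct FG as [->|FG].
        - exists G'; [exact FG'|]. split; [intros a []|intros a Ha; exact Ha].
        - destruct (HF G G' FG FG') as [GG'|G'G]; [exists G'|exists G]; auto.
          + split; [exact GG'|intros a Ha; exact Ha].
          + split; [intros a Ha; exact Ha|exact G'G]. }
      destruct Hbig as [H FH [GH G'H]]. exists H; [right; exact FH|].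
      intros k' w' [<-|Hk'] Hw'.
      * assert (w' = w) as ->; [|exact (G'H _ G'k)].
        apply (functional_bigcup F HF Ffun k); [exact Hw'|exists G'; auto].
      * exact (GH _ (Gcov k' w' Hk' Hw')).
    + exists G; [exact FG|]. intros k' w' [<-|Hk'] Hw'.
      * exfalso; apply nk; exists w'; exact Hw'.
      * exact (Gcov k' w' Hk' Hw').
Qed.

End Graphs.

Lemma card_le_refl (T : Type) : card_le T T.
Proof. exists (fun x => x); auto. Qed.

Lemma card_le_trans (T U V : Type) : card_le T U -> card_le U V -> card_le T V.
Proof. intros [f Hf] [g Hg]; exists (fun x => g (f x)); auto. Qed.

Lemma card_le_sig (T : Type) (S : T -> Prop) : card_le (sig S) T.
Proof.
  exists (@proj1_sig _ S). exact proj1_sig_inj.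
Qed.

Lemma card_le_prod_nat (T U : Type) : card_le T U -> card_le (T * nat) (U * nat).
Proof.
  intros [f Hf]. exists (fun a => (f (fst a), snd a)).
  intros [x n] [y m] E; injection E as E' ->; rewrite (Hf _ _ E'); reflexivity.
Qed.

Lemma card_le_prod_nat_nat (T : Type) : card_le ((T * nat) * nat) (T * nat).
Proof.
  exists (fun a => (fst (fst a), to_nat (snd (fst a), snd a))).
  intros [[x n] k] [[y m] l] E.
  pose proof (f_equal fst E) as Ex; pose proof (f_equal snd E) as E'.
  cbn [fst snd] in Ex, E'; subst y.
  apply (f_equal of_nat) in E'; rewrite !cancel_of_to in E'.
  injection E' as -> ->; reflexivity.
Qed.

Lemma card_le_total (U V : Type) : card_le U V \/ card_le V U.
Proof.
  destruct (Zorn_maximal (fun G : set (U * V) => functional_graph G /\ injective_graph G))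
    as [G [[Gfun Ginj] Gmax]].
  { intros F FP HF; split.
    - apply functional_bigcup; [exact HF|intros G FG; exact (proj1 (FP G FG))].
    - intros u u' v H H'. destruct (chain_bigcup2 _ _ _ HF H H') as [G FG [Gu Gu']].
      exact (proj2 (FP G FG) _ _ _ Gu Gu'). }
  destruct (classic (forall u, exists v, G (u, v))) as [Gtot|Gpart].
  { left. exists (fun u => witness (Gtot u)). intros u u' E.
    pose proof (witnessP (Gtot u)) as Hu; pose proof (witnessP (Gtot u')) as Hu'.
    rewrite E in Hu. exact (Ginj _ _ _ Hu Hu'). }
  destruct (classic (forall v, exists u, G (u, v))) as [Gsurj|Gns].
  { right. exists (fun v => witness (Gsurj v)). intros v v' E.
    pose proof (witnessP (Gsurj v)) as Hv; pose proof (witnessP (Gsurj v')) as Hv'.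
    rewrite E in Hv. exact (Gfun _ _ _ Hv Hv'). }
  exfalso. apply not_all_ex_not in Gpart as [u0 Hu0].
  apply not_all_ex_not in Gns as [v0 Hv0].
  assert (Hext : functional_graph (G `|` [set (u0, v0)]) /\
                 injective_graph (G `|` [set (u0, v0)])).
  { split; [apply functional_setU1; assumption|].
    intros u u' v [H|H] [H'|H'].
    - exact (Ginj _ _ _ H H').
    - injection H' as -> ->. exfalso; apply Hv0; exists u; exact H.
    - injection H as -> ->. exfalso; apply Hv0; exists u'; exact H'.
    - injection H as -> ->. injection H' as ->. reflexivity. }
  apply Hu0. exists v0. apply (Gmax _ Hext); [intros a Ga; left; exact Ga|right; reflexivity].
Qed.

Lemma card_le_split (T : Type) (S : T -> Prop) :
  card_le (sig (fun x => ~ S x)) (sig S) -> card_le T (sig S * nat).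
Proof.
  intros [k Hk].
  exists (fun x => match excluded_middle_informative (S x) with
                   | left H => (exist S x H, 0)
                   | right H => (k (exist _ x H), 1) end).
  intros x y. destruct excluded_middle_informative as [Hx|Hx];
    destruct excluded_middle_informative as [Hy|Hy]; intros E; try discriminate.
  - injection E as E; exact E.
  - injection E as E. apply Hk in E. injection E as E; exact E.
Qed.

Section Absorption.
Context {Q : Type}.

Definition nat_self_bijection (h : set (Q * (Q * nat))) : Prop :=
  functional_graph h /\ injective_graph h /\
  (forall s s' n, h (s, (s', n)) -> graph_dom h s') /\
  (forall s' n, graph_dom h s' -> exists s, h (s, (s', n))).

Lemma nat_self_bijection_bigcup (F : set (set (Q * (Q * nat)))) :
  F `<=` nat_self_bijection -> total_on F subset ->
  nat_self_bijection (\bigcup_(h in F) h).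
Proof.
  intros FP HF. split; [|split; [|split]].
  - apply functional_bigcup; [exact HF|intros h Fh; exact (proj1 (FP h Fh))].
  - intros s s' w H H'. destruct (chain_bigcup2 _ _ _ HF H H') as [h Fh [hs hs']].
    exact (proj1 (proj2 (FP h Fh)) _ _ _ hs hs').
  - intros s s' n [h Fh hs].
    destruct (proj1 (proj2 (proj2 (FP h Fh))) _ _ _ hs) as [w hw].
    exists w, h; assumption.
  - intros s' n [w [h Fh hw]].
    destruct (proj2 (proj2 (proj2 (FP h Fh))) s' n (ex_intro _ w hw)) as [s hs].
    exists s, h; assumption.
Qed.

Lemma nat_self_bijection_extend (h : set (Q * (Q * nat))) (j : nat -> Q) :
  nat_self_bijection h -> (forall n m, j n = j m -> n = m) ->
  (forall n, ~ graph_dom h (j n)) ->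
  exists2 h', nat_self_bijection h' & h `<=` h' /\ graph_dom h' (j 0).
Proof.
  intros [hfun [hinj [hrange hsurj]]] jinj jfresh.
  (* Cantor pairing [nat ~ nat * nat], transported along [j], defines [h'] on the fresh
     points [j n]. *)
  set (h' := h `|` (fun a => exists n,
               a = (j n, (j (fst (of_nat n)), snd (of_nat n))))).
  assert (Hnew : forall a b, h' (j (to_nat (a, b)), (j a, b))).
  { intros a b. right. exists (to_nat (a, b)). rewrite cancel_of_to; reflexivity. }
  assert (Hdom : forall a, graph_dom h' (j a)).
  { intros a. exists (j (fst (of_nat a)), snd (of_nat a)). right. exists a; reflexivity. }
  exists h'; [split; [|split; [|split]]|split].
  - intros s w w' [H|[n E]] [H'|[n' E']].
    + exact (hfun _ _ _ H H').
    + injection E' as -> _. exfalso; apply (jfresh n'); exists w; exact H.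
    + injection E as -> _. exfalso; apply (jfresh n); exists w'; exact H'.
    + injection E as E1 ->. injection E' as E2 ->.
      rewrite E1 in E2; rewrite (jinj _ _ E2); reflexivity.
  - intros s s' [w1 w2] [H|[n E]] [H'|[n' E']].
    + exact (hinj _ _ _ H H').
    + injection E' as _ -> _. exfalso; apply (jfresh (fst (of_nat n'))).
      exact (hrange _ _ _ H).
    + injection E as _ -> _. exfalso; apply (jfresh (fst (of_nat n))).
      exact (hrange _ _ _ H').
    + injection E as -> -> ->. injection E' as -> Ea Eb.
      apply jinj in Ea.
      assert (Eo : of_nat n = of_nat n').
      { destruct (of_nat n), (of_nat n'); simpl in *; subst; reflexivity. }
      rewrite <- (cancel_to_of n), <- (cancel_to_of n'), Eo; reflexivity.
  - intros s s' n [H|[k E]].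
    + destruct (hrange _ _ _ H) as [w Hw]. exists w; left; exact Hw.
    + injection E as _ -> _. apply Hdom.
  - intros s' n [w [H|[k E]]].
    + destruct (hsurj s' n (ex_intro _ w H)) as [s Hs]. exists s; left; exact Hs.
    + injection E as -> _. exists (j (to_nat (k, n))). apply Hnew.
  - intros a Ha; left; exact Ha.
  - apply Hdom.
Qed.

Lemma card_le_dom_prod_nat (h : set (Q * (Q * nat))) :
  nat_self_bijection h -> card_le (sig (graph_dom h) * nat) (sig (graph_dom h)).
Proof.
  intros [hfun [_ [_ hsurj]]].
  assert (Hpre : forall a : sig (graph_dom h) * nat,
            exists s, h (s, (proj1_sig (fst a), snd a))).
  { intros [[s' Hs'] n]; exact (hsurj s' n Hs'). }
  assert (Hdom : forall a, graph_dom h (witness (Hpre a))).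
  { intros a; exists (proj1_sig (fst a), snd a); exact (witnessP (Hpre a)). }
  exists (fun a => exist _ (witness (Hpre a)) (Hdom a)).
  intros [[s1 H1] n1] [[s2 H2] n2] E.
  apply (f_equal (@proj1_sig _ _)) in E; cbn [proj1_sig] in E.
  pose proof (witnessP (Hpre (exist _ s1 H1, n1))) as W1.
  pose proof (witnessP (Hpre (exist _ s2 H2, n2))) as W2.
  rewrite E in W1. injection (hfun _ _ _ W1 W2) as E1 ->.
  f_equal; apply proj1_sig_inj, E1.
Qed.

Theorem card_prod_nat_le : card_le nat Q -> card_le (Q * nat) Q.
Proof.
  intros natQ.
  destruct (Zorn_maximal nat_self_bijection) as [h [Hh hmax]].
  { intros F FP HF; exact (nat_self_bijection_bigcup F FP HF). }
  set (S := graph_dom h).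
  pose proof (card_le_dom_prod_nat h Hh) as Hfold.
  (* By maximality the complement of [S] contains no copy of [nat], hence is smaller
     than [S], and then [Q] embeds into [S * nat]. *)
  assert (Rsmall : ~ card_le nat (sig (fun q => ~ S q))).
  { intros [j jinj].
    destruct (nat_self_bijection_extend h (fun n => proj1_sig (j n)) Hh)
      as [h' Hh' [hh' [w Hw]]].
    - intros n m E; apply jinj, proj1_sig_inj, E.
    - intros n; exact (proj2_sig (j n)).
    - apply (proj2_sig (j 0)). exists w. exact (hmax h' Hh' hh' _ Hw). }
  assert (RS : card_le (sig (fun q => ~ S q)) (sig S)).
  { destruct (card_le_total (sig (fun q => ~ S q)) (sig S)) as [RS|[k kinj]];
      [exact RS|exfalso; apply Rsmall].
    destruct (classic (exists s, S s)) as [[s Ss]|noS].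
    - eapply card_le_trans; [|exists k; exact kinj].
      eapply card_le_trans; [|exact Hfold].
      exists (fun n => (exist S s Ss, n)). intros n m E; injection E; auto.
    - eapply card_le_trans; [exact natQ|].
      exists (fun q => exist (fun q => ~ S q) q (fun Sq => noS (ex_intro _ q Sq))).
      intros q q' E; apply (f_equal (@proj1_sig _ _)) in E; exact E. }
  eapply card_le_trans; [apply card_le_prod_nat, card_le_split, RS|].
  eapply card_le_trans; [apply card_le_prod_nat_nat|].
  eapply card_le_trans; [exact Hfold|]. apply card_le_sig.
Qed.

End Absorption.

Lemma card_le_sum_prod_nat (T U V : Type) : card_le nat V ->
  card_le T V -> card_le U V -> card_le (T + U * nat) V.
Proof.
  intros natV [f Hf] [g Hg].
  eapply card_le_trans; [|apply (card_prod_nat_le natV)].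
  exists (fun a => match a with inl x => (f x, 0) | inr (y, n) => (g y, S n) end).
  intros [x|[y n]] [x'|[y' n']] E; injection E; try discriminate; intros.
  - f_equal; auto.
  - f_equal; f_equal; auto.
Qed.

Lemma card_sum_prod_nat_lt (T U Lam : Type) : card_le nat U ->
  card_lt T Lam -> card_lt U Lam -> ~ card_le Lam (T + U * nat).
Proof.
  intros natU [_ HT] [_ HU] HL.
  destruct (card_le_total T U) as [TU|UT].
  - apply HU. eapply card_le_trans; [exact HL|].
    apply card_le_sum_prod_nat; [exact natU|exact TU|apply card_le_refl].
  - apply HT. eapply card_le_trans; [exact HL|].
    apply card_le_sum_prod_nat; [eapply card_le_trans; eassumption|apply card_le_refl|exact UT].
Qed.

Lemma finite_or_nat_le (T : Type) : (exists l : list T, forall x, In x l) \/ card_le nat T.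
Proof.
  destruct (classic (exists l : list T, forall x, In x l)) as [fin|inf]; [left; exact fin|right].
  assert (fresh : forall l : list T, exists x, ~ In x l).
  { intros l. apply not_all_ex_not. intros Hl. apply inf. exists l; exact Hl. }
  set (g := nat_rect (fun _ => list T) [] (fun _ l => witness (fresh l) :: l)).
  set (f := fun n => witness (fresh (g n))).
  assert (Hin : forall k n, In (f n) (g (S k + n))).
  { induction k; intros n; [left; reflexivity|right; apply (IHk n)]. }
  assert (Hlt : forall n m, n < m -> f n <> f m).
  { intros n m Hnm E. destruct (Nat.le_exists_sub (S n) m Hnm) as [k [-> _]].
    pose proof (Hin k n) as H. rewrite Nat.add_succ_comm, E in H.
    exact (witnessP (fresh (g (k + S n))) H). }
  exists f. intros n m E.
  destruct (Nat.lt_total n m) as [H|[H|H]]; [exfalso; exact (Hlt _ _ H E)|exact H|].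
  exfalso; exact (Hlt _ _ H (eq_sym E)).
Qed.

Fixpoint fin_enum (n : nat) : list (Fin.t n) :=
  match n with 0 => [] | S n' => Fin.F1 :: map Fin.FS (fin_enum n') end.

Lemma In_fin_enum n (i : Fin.t n) : In i (fin_enum n).
Proof. induction i; simpl; auto using in_map. Qed.

Fixpoint fin_nth {T : Type} (l : list T) : Fin.t (length l) -> T :=
  match l with
  | [] => fun i => Fin.case0 (fun _ => T) i
  | a :: l' => fun i => Fin.caseS' i (fun _ => T) a (fin_nth l')
  end.

Lemma fin_nthP {T : Type} (l : list T) x : In x l -> exists i, fin_nth l i = x.
Proof.
  induction l as [|a l IH]; simpl; [tauto|]. intros [<-|H].
  - exists Fin.F1; reflexivity.
  - destruct (IH H) as [i Hi]. exists (Fin.FS i); exact Hi.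
Qed.

Lemma common_superlist {T U : Type} (Q : T -> Prop) (f : list T -> U) (us : list U) :
  (forall u, In u us -> exists2 l, (forall a, In a l -> Q a) & u = f l) ->
  exists2 big, (forall a, In a big -> Q a) &
    forall u, In u us -> exists2 l, incl l big & u = f l.
Proof.
  induction us as [|u us IH]; intros Hus.
  - exists []; [intros _ []|intros _ []].
  - destruct IH as [big Hbig Hcov]; [intros; apply Hus; right; assumption|].
    destruct (Hus u (or_introl eq_refl)) as [l Hl ->].
    exists (l ++ big).
    + intros a Ha. apply in_app_or in Ha as [Ha|Ha]; auto.
    + intros v [<-|Hv].
      * exists l; [apply incl_appl, incl_refl|reflexivity].
      * destruct (Hcov v Hv) as [l' Hl' ->]. exists l'; [apply incl_appr, Hl'|reflexivity].
Qed.

Section Syntax.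
Context {L : vocab} (C : structure L).

Fixpoint rename {V W : Type} (f : V -> W) (phi : form L V) : form L W :=
  match phi with
  | fTop => fTop
  | fP v => fP (f v)
  | fEq v w => fEq (f v) (f w)
  | fRel r a => fRel r (fun i => f (a i))
  | fNot psi => fNot (rename f psi)
  | fAnd psi chi => fAnd (rename f psi) (rename f chi)
  | fEx psi => fEx (rename (option_map f) psi)
  end.

Fixpoint free_vars {V : Type} (phi : form L V) : list V :=
  match phi with
  | fTop => []
  | fP v => [v]
  | fEq v w => [v; w]
  | fRel r a => map a (fin_enum (arity L r))
  | fNot psi => free_vars psi
  | fAnd psi chi => free_vars psi ++ free_vars chi
  | fEx psi => flat_map (fun o => match o with Some v => [v] | None => [] end) (free_vars psi)
  end.

Lemma sat_free_vars {V : Type} (phi : form L V) : forall D (s s' : V -> car C),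
  (forall v, In v (free_vars phi) -> s v = s' v) ->
  (sat_in C D s phi <-> sat_in C D s' phi).
Proof.
  induction phi; intros D s s' H; simpl in *.
  - tauto.
  - rewrite H; auto. tauto.
  - rewrite (H v), (H v0); auto. tauto.
  - match goal with |- relI C _ ?F <-> relI C _ ?G => replace G with F; [tauto|] end.
    apply functional_extensionality; intros i. apply H, in_map, In_fin_enum.
  - rewrite (IHphi D s s' H); tauto.
  - rewrite (IHphi1 D s s'), (IHphi2 D s s'); [tauto| |];
      intros v Hv; apply H, in_or_app; auto.
  - assert (HE : forall c v, In v (free_vars phi) -> ext s c v = ext s' c v).
    { intros c [v|] Hv; simpl; auto. apply H, in_flat_map. exists (Some v); simpl; auto. }
    split; intros [c [Dc Hc]]; exists c; split; auto.
    + exact (proj1 (IHphi D (ext s c) (ext s' c) (HE c)) Hc).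
    + exact (proj2 (IHphi D (ext s c) (ext s' c) (HE c)) Hc).
Qed.

Lemma sat_in_ext {V : Type} (phi : form L V) D (s s' : V -> car C) :
  (forall v, s v = s' v) -> (sat_in C D s phi <-> sat_in C D s' phi).
Proof. intros H; apply sat_free_vars; auto. Qed.

Lemma sat_rename {V : Type} (phi : form L V) : forall {W : Type} (f : V -> W) D s,
  sat_in C D s (rename f phi) <-> sat_in C D (fun v => s (f v)) phi.
Proof.
  induction phi; intros W f D s; cbn [rename sat_in]; try tauto.
  - rewrite IHphi; tauto.
  - rewrite IHphi1, IHphi2; tauto.
  - split; intros [c [Dc H]]; exists c; split; auto; rewrite IHphi in *;
      revert H; apply sat_in_ext; intros [v|]; reflexivity.
Qed.

Definition shift_var {V : Type} (k : nat) (u : V + Fin.t (S k)) : option (V + Fin.t k) :=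
  match u with
  | inl v => Some (inl v)
  | inr i => Fin.caseS' i (fun _ => option (V + Fin.t k)) None (fun i' => Some (inr i'))
  end.

Definition drop_fin0 {V : Type} (u : V + Fin.t 0) : V :=
  match u with inl v => v | inr i => Fin.case0 (fun _ => V) i end.

Fixpoint exists_n {V : Type} (k : nat) : form L (V + Fin.t k) -> form L V :=
  match k with
  | 0 => fun phi => rename drop_fin0 phi
  | S k' => fun phi => exists_n k' (fEx (rename (shift_var k') phi))
  end.

Lemma sat_exists_n (k : nat) : forall {V : Type} (phi : form L (V + Fin.t k)) D s,
  sat_in C D s (exists_n k phi) <->
  exists e : Fin.t k -> car C, (forall i, D (e i)) /\ sat_in C D (sum_asg s e) phi.
Proof.
  induction k; intros V phi D s; simpl.
  - rewrite sat_rename. split.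
    + intros H. exists (fun i => Fin.case0 _ i). split; [intros i; apply Fin.case0 with (p := i)|].
      revert H; apply sat_in_ext. intros [v|i]; [reflexivity|apply Fin.case0 with (p := i)].
    + intros [e [_ H]]. revert H; apply sat_in_ext.
      intros [v|i]; [reflexivity|apply Fin.case0 with (p := i)].
  - rewrite IHk. split.
    + intros [e' [De' [c [Dc H]]]]. rewrite sat_rename in H.
      exists (fun i => Fin.caseS' i (fun _ => car C) c e'). split.
      * intros i. pattern i; apply Fin.caseS'; simpl; auto.
      * revert H; apply sat_in_ext. intros [v|i]; [reflexivity|].
        pattern i; apply Fin.caseS'; reflexivity.
    + intros [e [De H]]. exists (fun i => e (Fin.FS i)). split; [auto|].
      exists (e Fin.F1). split; auto. rewrite sat_rename.
      revert H; apply sat_in_ext. intros [v|i]; [reflexivity|].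
      pattern i; apply Fin.caseS'; reflexivity.
Qed.

Fixpoint big_and {V : Type} (l : list (form L V)) : form L V :=
  match l with [] => fTop | phi :: l' => fAnd phi (big_and l') end.

Lemma sat_big_and {V : Type} (l : list (form L V)) D s :
  sat_in C D s (big_and l) <-> forall phi, In phi l -> sat_in C D s phi.
Proof.
  induction l as [|phi l IH]; simpl.
  - split; [intros _ _ []|auto].
  - rewrite IH. split.
    + intros [H1 H2] psi [<-|H]; auto.
    + intros H; split; auto.
Qed.

End Syntax.

Section Elementary.
Context {L : vocab} (C : structure L) (M : car C -> Prop) (HM : elementary C M).

Definition swap_sum {U V : Type} (u : U + V) : V + U :=
  match u with inl a => inr a | inr b => inl b end.

Lemma complete_between (B : car C -> Prop) :
  (forall e, Pint C e -> M e -> B e) -> (forall e, B e -> M e) -> complete C B.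
Proof.
  intros PMB BM n m psi b Bb [a [Pa Hs]].
  set (Phi := rename swap_sum
                (fAnd (big_and (map (fun i => @fP L _ (inl i)) (fin_enum n))) psi)).
  assert (bM : forall j, M (b j)) by (intros j; apply BM, Bb).
  assert (HC : sat C b (exists_n n Phi)).
  { unfold sat. apply sat_exists_n. exists a. split; [auto|].
    unfold Phi. rewrite sat_rename. cbn [sat_in]. split.
    - apply sat_big_and. intros phi Hphi. apply in_map_iff in Hphi as [i [<- _]]. apply Pa.
    - revert Hs. apply sat_in_ext. intros [i|j]; reflexivity. }
  apply (HM _ _ _ bM), sat_exists_n in HC as [e [eM He]].
  unfold Phi in He. rewrite sat_rename in He. cbn [sat_in] in He.
  destruct He as [HP Hpsi]. rewrite sat_big_and in HP.
  assert (eP : forall i, Pint C (e i)).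
  { intros i. apply (HP (fP (inl i))), in_map_iff. exists i; split; [reflexivity|apply In_fin_enum]. }
  exists e. split.
  - intros i. split; [|apply PMB]; auto.
  - apply (HM _ _ _); [intros [i|j]; simpl; auto|].
    revert Hpsi; apply sat_in_ext. intros [i|j]; reflexivity.
Qed.

Lemma realize_in_elementary (B : car C -> Prop) (BM : forall e, B e -> M e)
  (Ls : list (form L (unit + sig B))) (c : car C) :
  (forall psi, In psi Ls -> sat C (sum_asg (fun _ : unit => c) (@proj1_sig _ B)) psi) ->
  exists2 m, M m &
    forall psi, In psi Ls -> sat C (sum_asg (fun _ : unit => m) (@proj1_sig _ B)) psi.
Proof.
  intros Hc.
  set (g := fun u : unit + sig B => match u with inl _ => None | inr b => Some b end).
  set (Phi := fEx (rename g (big_and Ls))).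
  assert (BM' : forall b : sig B, M (proj1_sig b)) by (intros [b Hb]; exact (BM b Hb)).
  assert (H : sat C (@proj1_sig _ B) Phi).
  { unfold sat, Phi. cbn [sat_in]. exists c. split; [exact I|]. rewrite sat_rename.
    apply sat_big_and. intros psi Hpsi. specialize (Hc psi Hpsi). revert Hc.
    apply sat_in_ext. intros [[]|b]; reflexivity. }
  apply (HM _ _ _ BM') in H. unfold Phi in H. cbn [sat_in] in H.
  destruct H as [m [mM Hm]]. rewrite sat_rename in Hm.
  exists m; [exact mM|]. intros psi Hpsi.
  assert (Hm' : sat_in C M (sum_asg (fun _ : unit => m) (@proj1_sig _ B)) (big_and Ls)).
  { revert Hm; apply sat_in_ext. intros [[]|b]; reflexivity. }
  apply (HM _ _ _) in Hm'; [|intros [[]|b]; simpl; auto].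
  exact (proj1 (sat_big_and C Ls _ _) Hm' psi Hpsi).
Qed.

Lemma tp_in_S_star (A : car C -> Prop) (X : Type) (c : X -> car C) :
  (forall e, Pint C e -> M e -> A e) -> (forall e, A e -> M e) -> (forall x, M (c x)) ->
  S_star C X A (tp C c A).
Proof.
  intros PMA AM cM. split; [exact (complete_between A PMA AM)|].
  exists c. split; [tauto|split].
  - intros e Pe. split; [|intros Ae; left; exact Ae].
    intros [Ae|[x <-]]; [exact Ae|exact (PMA _ Pe (cM x))].
  - apply complete_between.
    + intros e Pe Me; left; exact (PMA _ Pe Me).
    + intros e [Ae|[x <-]]; auto.
Qed.

End Elementary.

Section Realization.
Context {L : vocab} (C : structure L) (M : car C -> Prop) (HM : elementary C M)
  (Lam : Type) (Hsat : saturated C Lam M)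
  (A : car C -> Prop) (AM : forall e, A e -> M e) (X : Type) (HX : card_lt X Lam)
  (p : form L (X + sig A) -> Prop) (Hp : partial_type C A p)
  (Hcard : card_lt (sig p) Lam).

Definition part_of_p (l : list (form L (X + sig A))) : Prop := forall phi, In phi l -> p phi.

Definition realizes (d : X -> car C) (l : list (form L (X + sig A))) : Prop :=
  forall phi, In phi l -> sat C (sum_asg d (@proj1_sig _ A)) phi.

(* The finite character of the last clause makes admissibility closed under unions of
   chains. *)
Definition admissible (t : set (X * car C)) : Prop :=
  functional_graph t /\ (forall z v, t (z, v) -> M v) /\
  forall l, part_of_p l -> exists2 d, realizes d l &
    forall phi z v, In phi l -> In (inl z) (free_vars phi) -> t (z, v) -> d z = v.

Definition vars (l : list (form L (X + sig A))) : list X :=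
  flat_map (fun phi => flat_map (fun u => match u with inl z => [z] | inr _ => [] end)
                                (free_vars phi)) l.

Lemma In_vars l phi z : In phi l -> In (inl z) (free_vars phi) -> In z (vars l).
Proof.
  intros Hphi Hz. apply in_flat_map. exists phi. split; [exact Hphi|].
  apply in_flat_map. exists (inl z). simpl; auto.
Qed.

Lemma admissible_set0 : admissible set0.
Proof.
  split; [intros z v v' []|split; [intros z v []|]].
  intros l Hl. destruct (Hp l Hl) as [d Hd]. exists d; [exact Hd|]. intros phi z v _ _ [].
Qed.

Lemma admissible_bigcup (F : set (set (X * car C))) :
  F `<=` admissible -> total_on F subset -> admissible (\bigcup_(t in F) t).
Proof.
  intros FA HF.
  assert (Ffun : F `<=` functional_graph) by (intros t Ft; exact (proj1 (FA t Ft))).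
  split; [exact (functional_bigcup F HF Ffun)|split].
  - intros z v [t Ft tz]. exact (proj1 (proj2 (FA t Ft)) z v tz).
  - intros l Hl. destruct (chain_cover F (vars l) HF Ffun) as [t Ht tcov].
    assert (At : admissible t).
    { destruct Ht as [->|Ft]; [exact admissible_set0|exact (FA t Ft)]. }
    destruct (proj2 (proj2 At) l Hl) as [d Hd dt].
    exists d; [exact Hd|]. intros phi z v Hphi Hz Hv.
    apply (dt phi); [exact Hphi|exact Hz|]. apply tcov; [|exact Hv]. exact (In_vars l phi z Hphi Hz).
Qed.

Section Extension.
Context (t : set (X * car C)) (At : admissible t) (x : X) (xfree : ~ graph_dom t x).

Definition extends_on (m : car C) (l : list (form L (X + sig A))) : Prop :=
  exists d, d x = m /\ (forall z v, t (z, v) -> d z = v) /\ realizes d l.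

Definition extends_at (m : car C) : Prop := forall l, part_of_p l -> extends_on m l.

Definition support : set (car C) := fun e =>
  (exists z, t (z, e)) \/ exists phi a, p phi /\ In (inr a) (free_vars phi) /\ proj1_sig a = e.

Definition param_val (m : car C) : unit + sig support -> car C :=
  sum_asg (fun _ : unit => m) (@proj1_sig _ support).

(* [x] becomes the free variable, variables already assigned by [t] become their values,
   and the other variables listed in [zs] become positions to be quantified; everything
   else goes to the junk value [inl (inl tt)] and never occurs in [step_formula l]. *)
Definition collapse (zs : list X) (u : X + sig A) : (unit + sig support) + Fin.t (length zs) :=
  match u with
  | inl z =>
      if excluded_middle_informative (z = x) then inl (inl tt) else
      match excluded_middle_informative (exists v, t (z, v)) with
      | left H => inl (inr (exist support (witness H) (or_introl (ex_intro _ z (witnessP H)))))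
      | right _ =>
          match excluded_middle_informative (exists i, fin_nth zs i = z) with
          | left H => inr (witness H)
          | right _ => inl (inl tt)
          end
      end
  | inr a =>
      match excluded_middle_informative (support (proj1_sig a)) with
      | left H => inl (inr (exist support _ H))
      | right _ => inl (inl tt)
      end
  end.

Definition step_formula (l : list (form L (X + sig A))) : form L (unit + sig support) :=
  exists_n (length (vars l)) (big_and (map (rename (collapse (vars l))) l)).

Lemma collapse_x zs m e : sum_asg (param_val m) e (collapse zs (inl x)) = m.
Proof. simpl. destruct excluded_middle_informative as [_|nx]; [reflexivity|congruence]. Qed.

Lemma collapse_assigned zs m e z v :
  t (z, v) -> sum_asg (param_val m) e (collapse zs (inl z)) = v.
Proof.
  intros tz. simpl. destruct excluded_middle_informative as [->|_].
  { exfalso; apply xfree; exists v; exact tz. }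
  destruct excluded_middle_informative as [H|nz]; [|exfalso; apply nz; exists v; exact tz].
  exact (proj1 At _ _ _ (witnessP H) tz).
Qed.

Lemma collapse_unassigned zs m (d : X -> car C) z : ~ graph_dom t z -> z <> x -> In z zs ->
  sum_asg (param_val m) (fun i => d (fin_nth zs i)) (collapse zs (inl z)) = d z.
Proof.
  intros nz zx Hz. simpl. destruct excluded_middle_informative as [E|_]; [congruence|].
  destruct excluded_middle_informative as [H|_]; [exfalso; exact (nz H)|].
  destruct excluded_middle_informative as [H|nH]; [simpl; f_equal; exact (witnessP H)|].
  exfalso; exact (nH (fin_nthP zs z Hz)).
Qed.

Lemma collapse_param zs m e phi a : p phi -> In (inr a) (free_vars phi) ->
  sum_asg (param_val m) e (collapse zs (inr a)) = proj1_sig a.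
Proof.
  intros Hphi Ha. simpl. destruct excluded_middle_informative as [Sa|nS]; [reflexivity|].
  exfalso; apply nS; right; exists phi, a; auto.
Qed.

Lemma sat_step_formula_elim l m : part_of_p l ->
  sat C (param_val m) (step_formula l) -> extends_on m l.
Proof.
  intros Hl H. unfold step_formula, sat in H. rewrite sat_exists_n in H.
  destruct H as [e [_ He]]. rewrite sat_big_and in He.
  exists (fun z => sum_asg (param_val m) e (collapse (vars l) (inl z))).
  split; [apply collapse_x|split; [intros z v; apply collapse_assigned|]].
  intros phi Hphi. specialize (He _ (in_map _ _ _ Hphi)). rewrite sat_rename in He.
  revert He. apply sat_free_vars. intros [z|a] Ha; [reflexivity|].
  symmetry; exact (collapse_param (vars l) m e phi a (Hl _ Hphi) Ha).
Qed.

Lemma sat_step_formula_intro l (d : X -> car C) : part_of_p l -> realizes d l ->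
  (forall phi z v, In phi l -> In (inl z) (free_vars phi) -> t (z, v) -> d z = v) ->
  sat C (param_val (d x)) (step_formula l).
Proof.
  intros Hl Hd dt. unfold step_formula, sat. rewrite sat_exists_n.
  exists (fun i => d (fin_nth (vars l) i)). split; [intros; exact I|].
  rewrite sat_big_and. intros psi Hpsi. apply in_map_iff in Hpsi as [phi [<- Hphi]].
  rewrite sat_rename. specialize (Hd phi Hphi). revert Hd. apply sat_free_vars.
  intros [z|a] Hz.
  - destruct (classic (z = x)) as [->|zx]; [exact (collapse_x (vars l) (d x) _)|].
    destruct (classic (graph_dom t z)) as [[v tz]|nz].
    + rewrite (collapse_assigned _ _ _ _ _ tz). exact (eq_sym (dt phi z v Hphi Hz tz)).
    + apply collapse_unassigned; [exact nz|exact zx|exact (In_vars l phi z Hphi Hz)].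
  - exact (collapse_param _ _ _ phi a (Hl _ Hphi) Hz).
Qed.

Lemma support_in_M e : support e -> M e.
Proof.
  intros [[z tz]|[phi [a [_ [_ <-]]]]]; [exact (proj1 (proj2 At) _ _ tz)|exact (AM _ (proj2_sig a))].
Qed.

Lemma param_val_in_M m : M m -> forall u, M (param_val m u).
Proof. intros mM [[]|[e He]]; [exact mM|exact (support_in_M e He)]. Qed.

Lemma card_le_support : card_le (sig support) (X + sig p * nat).
Proof.
  assert (Hpos : forall b : sig support, ~ (exists z, t (z, proj1_sig b)) ->
            exists pn : sig p * nat, exists a,
              nth_error (free_vars (proj1_sig (fst pn))) (snd pn) = Some (inr a) /\
              proj1_sig a = proj1_sig b).
  { intros [e [He|[phi [a [Hphi [Ha Ea]]]]]] nb; [contradiction|].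
    destruct (In_nth_error _ _ Ha) as [n Hn]. exists (exist _ phi Hphi, n), a; auto. }
  exists (fun b => match excluded_middle_informative (exists z, t (z, proj1_sig b)) with
                   | left H => inl (witness H) | right H => inr (witness (Hpos b H)) end).
  intros b1 b2. destruct excluded_middle_informative as [H1|H1];
    destruct excluded_middle_informative as [H2|H2]; intros E; try discriminate.
  - injection E as E. pose proof (witnessP H1) as W1. pose proof (witnessP H2) as W2.
    rewrite E in W1. apply proj1_sig_inj. exact (proj1 At _ _ _ W1 W2).
  - injection E as E. pose proof (witnessP (Hpos b1 H1)) as [a1 [N1 E1]].
    pose proof (witnessP (Hpos b2 H2)) as [a2 [N2 E2]].
    rewrite E, N2 in N1. injection N1 as ->. apply proj1_sig_inj. congruence.
Qed.

Lemma extension_finite (lp : list (form L (X + sig A))) :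
  part_of_p lp -> (forall phi, p phi -> In phi lp) -> exists2 m, M m & extends_at m.
Proof.
  intros Hlp plp. destruct (proj2 (proj2 At) lp Hlp) as [d Hd dt].
  destruct (realize_in_elementary C M HM support support_in_M [step_formula lp] (d x))
    as [m mM Hm].
  { intros psi [<-|[]]. exact (sat_step_formula_intro lp d Hlp Hd dt). }
  exists m; [exact mM|]. intros l Hl.
  destruct (sat_step_formula_elim lp m Hlp (Hm _ (or_introl eq_refl))) as [d' [d'x [d't Hd']]].
  exists d'. split; [exact d'x|split; [exact d't|]]. intros phi Hphi. apply Hd', plp, Hl, Hphi.
Qed.

Lemma extension_infinite : card_le nat (sig p) -> exists2 m, M m & extends_at m.
Proof.
  intros natp.
  assert (Hlt : card_lt (sig support) Lam).
  { assert (Hn : ~ card_le Lam (sig support)).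
    { intros H. apply (card_sum_prod_nat_lt X (sig p) Lam natp HX Hcard).
      eapply card_le_trans; [exact H|apply card_le_support]. }
    split; [|exact Hn]. destruct (card_le_total (sig support) Lam); [assumption|contradiction]. }
  destruct (Hsat support support_in_M Hlt
              (fun psi => exists2 l, part_of_p l & psi = step_formula l)) as [m [mM Hm]].
  - intros Ls HLs. destruct (common_superlist p step_formula Ls HLs) as [big Hbig Hcov].
    destruct (proj2 (proj2 At) big Hbig) as [d Hd dt].
    destruct (realize_in_elementary C M HM support support_in_M Ls (d x)) as [m mM Hm].
    { intros psi Hpsi. destruct (Hcov psi Hpsi) as [l Hl ->].
      apply sat_step_formula_intro.
      - intros phi Hphi; exact (Hbig phi (Hl phi Hphi)).
      - intros phi Hphi; exact (Hd phi (Hl phi Hphi)).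
      - intros phi z v Hphi; exact (dt phi z v (Hl phi Hphi)). }
    exists m. split; [exact mM|]. intros psi Hpsi.
    apply (HM _ _ _ (param_val_in_M m mM)), Hm, Hpsi.
  - exists m; [exact mM|]. intros l Hl. apply (sat_step_formula_elim l m Hl).
    apply (HM _ _ _ (param_val_in_M m mM)), Hm. exists l; [exact Hl|reflexivity].
Qed.

Lemma extension_exists : exists2 m, M m & extends_at m.
Proof.
  destruct (finite_or_nat_le (sig p)) as [[lq Hlq]|natp]; [|exact (extension_infinite natp)].
  apply (extension_finite (map (@proj1_sig _ _) lq)).
  - intros phi Hphi. apply in_map_iff in Hphi as [[psi Hpsi] [<- _]]. exact Hpsi.
  - intros phi Hphi. apply (in_map (@proj1_sig _ _) lq (exist _ phi Hphi)), Hlq.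
Qed.

End Extension.

Lemma admissible_setU1 t x m : admissible t -> ~ graph_dom t x -> M m ->
  extends_at t x m -> admissible (t `|` [set (x, m)]).
Proof.
  intros At xfree mM Hm. split; [apply functional_setU1; [exact (proj1 At)|exact xfree]|split].
  - intros z v [tz|E]; [exact (proj1 (proj2 At) _ _ tz)|injection E as -> ->; exact mM].
  - intros l Hl. destruct (Hm l Hl) as [d [dx [dt Hd]]]. exists d; [exact Hd|].
    intros phi z v _ _ [tz|E]; [exact (dt _ _ tz)|injection E as -> ->; exact dx].
Qed.

Lemma exists_total_admissible : exists2 t, admissible t & forall z, exists v, t (z, v).
Proof.
  destruct (Zorn_maximal admissible) as [t [At tmax]].
  { intros F FA HF; exact (admissible_bigcup F FA HF). }
  exists t; [exact At|]. intros z. apply NNPP; intros nz.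
  destruct (extension_exists t At z nz) as [m mM Hm].
  apply nz; exists m. apply (tmax _ (admissible_setU1 t z m At nz mM Hm)).
  - intros a ta; left; exact ta.
  - right; reflexivity.
Qed.

Lemma admissible_total_tp t (c : X -> car C) : admissible t -> (forall z, t (z, c z)) ->
  forall phi, p phi -> tp C c A phi.
Proof.
  intros At tc phi Hphi.
  destruct (proj2 (proj2 At) [phi]) as [d Hd dt]; [intros psi [<-|[]]; exact Hphi|].
  specialize (Hd phi (or_introl eq_refl)). revert Hd. apply sat_free_vars.
  intros [z|a] Hz; [|reflexivity]. exact (eq_sym (dt phi z (c z) (or_introl eq_refl) Hz (tc z))).
Qed.

End Realization.

Theorem mainTheorem4 (L : vocab) (C : structure L)
  (HSE : stably_embedded C) (HP0 : P_zero_definable C) (HQE : has_QE C)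
  (Lam : Type) (M : car C -> Prop)
  (HM : elementary C M) (Hsat : saturated C Lam M)
  (A : car C -> Prop)
  (HPA : forall e, Pint C e -> M e -> A e) (HAM : forall e, A e -> M e)
  (X : Type) (HX : card_lt X Lam)
  (p : form L (X + sig A) -> Prop) (Hp : partial_type C A p)
  (Hcard : card_lt (sig p) Lam) :
  exists pstar : form L (X + sig A) -> Prop,
    S_star C X A pstar /\ (forall phi, p phi -> pstar phi).
Proof.
  destruct (exists_total_admissible C M HM Lam Hsat A HAM X HX p Hp Hcard) as [t At ttot].
  set (c := fun z => witness (ttot z)).
  assert (tc : forall z, t (z, c z)) by (intros z; exact (witnessP (ttot z))).
  exists (tp C c A). split.
  - apply (tp_in_S_star C M HM A X c HPA HAM).
    intros z. exact (proj1 (proj2 At) _ _ (tc z)).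
  - exact (admissible_total_tp C M A X p t c At tc).
Qed.
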